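(* Let $\beta=\pi/4$ and let $F,G_1,G_2$, $X_{\pm\pm}$, $s_{\max}$, $v$, $\bar M$ be as in the context, and $N=(0,0,1)^T$. Let $\theta(\alpha)=\arcsin\left(\frac{-2\sqrt2\sin\alpha\cos\alpha}{1+\cos^2\alpha}\right)$. For every integer $n$ and every $0<\alpha<\pi/4$, $$\bar M^n(0,\alpha)N=\begin{pmatrix}0\\ \sin(4n\theta(\alpha))\\ \cos(4n\theta(\alpha))\end{pmatrix},\qquad \bar M^n(s_{\max},\alpha)\,e^{s_{\max}X_{++}}N=\begin{pmatrix}0\\ \sin((4n+1)\theta(\alpha))\\ \cos((4n+1)\theta(\alpha))\end{pmatrix}.$$
   Context: $F=\cos\alpha\begin{pmatrix}0&-1&0\\1&0&0\\0&0&0\end{pmatrix}$, $G_1=\sin\alpha\sin\beta\begin{pmatrix}0&0&0\\0&0&-1\\0&1&0\end{pmatrix}$, $G_2=\sin\alpha\cos\beta\begin{pmatrix}0&0&-1\\0&0&0\\1&0&0\end{pmatrix}$, and $X_{ab}=F+aG_1+bG_2$ for $a,b\in\{+1,-1\}$. $s_{\max}=\arccos\left(-\frac{\sin^2\alpha}{1+\cos^2\alpha}\right)$. For $s\in[0,s_{\max}]$, $v(s)=\arccos\left[\frac{d-A(s)-B(s)-C(s)}{e-A(s)+B(s)}\right]$ with $A(s)=8\cos\alpha\sin^2\alpha\sin s$, $B(s)=2\sin^2(2\alpha)\cos s$, $C(s)=4\sin^4\alpha\cos(2s)$, $d=\sin^2(2\alpha)$, $e=5+2\cos2\alpha+\cos4\alpha$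 (the duration of interior bang arcs of normal extremals of $\dot x=(F+u_1G_1+u_2G_2)x$ on $S^2$ from $N$ with first bang arc of duration $s$). $\bar M(s,\alpha)=e^{v(s)X_{++}}e^{v(s)X_{-+}}e^{v(s)X_{--}}e^{v(s)X_{+-}}$. *)

From HB Require Import structures.
From mathcomp Require Import all_boot all_order all_algebra.
From mathcomp Require Import all_classical all_reals all_analysis.
Set Implicit Arguments. Unset Strict Implicit. Unset Printing Implicit Defensive.
Import Order.TTheory GRing.Theory Num.Theory.
Import numFieldNormedType.Exports.
Local Open Scope ring_scope.
Local Open Scope classical_set_scope.

Section Defs.
Variable R : realType.

Definition mx3 (a11 a12 a13 a21 a22 a23 a31 a32 a33 : R) : 'M[R]_3 :=
  \matrix_(i < 3, j < 3)
    nth 0 (nth [::] [:: [:: a11; a12; a13]; [:: a21; a22; a23]; [:: a31; a32; a33]] i) j.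

Definition vec3 (x y z : R) : 'cV[R]_3 := \col_(i < 3) [:: x; y; z]`_i.

Definition expmx (A : 'M[R]_3) : 'M[R]_3 :=
  lim (series (fun k : nat => (k`!%:R)^-1 *: A ^+ k) @ \oo).

Definition Fm (al : R) : 'M[R]_3 := cos al *: mx3 0 (-1) 0  1 0 0  0 0 0.
Definition G1 (al be : R) : 'M[R]_3 :=
  (sin al * sin be) *: mx3 0 0 0  0 0 (-1)  0 1 0.
Definition G2 (al be : R) : 'M[R]_3 :=
  (sin al * cos be) *: mx3 0 0 (-1)  0 0 0  1 0 0.

(* X_{ab} = F + a G1 + b G2, with a, b given as booleans: true = +1, false = -1 *)
Definition sgn (b : bool) : R := if b then 1 else -1.
Definition Xab (al be : R) (a b : bool) : 'M[R]_3 :=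
  Fm al + sgn a *: G1 al be + sgn b *: G2 al be.

Definition s_max (al : R) : R :=
  acos (- (sin al ^+ 2) / (1 + cos al ^+ 2)).

Definition Acoef (al s : R) : R := 8 * cos al * sin al ^+ 2 * sin s.
Definition Bcoef (al s : R) : R := 2 * sin (2 * al) ^+ 2 * cos s.
Definition Ccoef (al s : R) : R := 4 * sin al ^+ 4 * cos (2 * s).
Definition dcoef (al : R) : R := sin (2 * al) ^+ 2.
Definition ecoef (al : R) : R := 5 + 2 * cos (2 * al) + cos (4 * al).

Definition v (al s : R) : R :=
  acos ((dcoef al - Acoef al s - Bcoef al s - Ccoef al s) /
        (ecoef al - Acoef al s + Bcoef al s)).

Definition Mbar (be s al : R) : 'M[R]_3 :=
  expmx (v al s *: Xab al be true true) *m
  expmx (v al s *: Xab al be false true) *m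
  expmx (v al s *: Xab al be false false) *m
  expmx (v al s *: Xab al be true false).

Definition Npole : 'cV[R]_3 := vec3 0 0 1.

Definition theta (al : R) : R :=
  asin ((- 2 * Num.sqrt 2 * sin al * cos al) / (1 + cos al ^+ 2)).

End Defs.

(* At beta = pi/4 every X_ab is the cross-product matrix of a unit vector
   (a u, -b u, cos alpha) with u = sin alpha / sqrt 2, so by Rodrigues' formula
   e^{t X_ab} is a rotation by the angle t.  Both s = 0 and s = s_max give
   v(s) = s_max, whose cosine and sine are rational in cos alpha.  Parametrising
   the ellipse c^2 + 2 u^2 = 1 rationally, the product of the four rotations
   becomes an identity of rational functions: it is the fourth power of the
   rotation about the first axis by theta(alpha), which preserves the plane x = 0
   through N.  Finally e^{s_max X_++} N is already N rotated by theta(alpha). *)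

From HB Require Import structures.
From mathcomp Require Import all_boot all_order all_algebra.
From mathcomp Require Import all_classical all_reals all_analysis.
From mathcomp Require Import ring lra.
Import Order.TTheory GRing.Theory Num.Theory.
Import numFieldNormedType.Exports.
Local Open Scope ring_scope.
Set Implicit Arguments. Unset Strict Implicit.

Section Rotations.
Variable R : realType.

Lemma mul_mx3 (a11 a12 a13 a21 a22 a23 a31 a32 a33
               b11 b12 b13 b21 b22 b23 b31 b32 b33 : R) :
  mx3 a11 a12 a13 a21 a22 a23 a31 a32 a33 *m mx3 b11 b12 b13 b21 b22 b23 b31 b32 b33 =
  mx3 (a11*b11 + a12*b21 + a13*b31) (a11*b12 + a12*b22 + a13*b32) (a11*b13 + a12*b23 + a13*b33)
      (a21*b11 + a22*b21 + a23*b31) (a21*b12 + a22*b22 + a23*b32) (a21*b13 + a22*b23 + a23*b33)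
      (a31*b11 + a32*b21 + a33*b31) (a31*b12 + a32*b22 + a33*b32) (a31*b13 + a32*b23 + a33*b33).
Proof.
apply/matrixP => i j; rewrite !mxE !big_ord_recr big_ord0 /= !mxE add0r.
by case: i => [[|[|[|i]]] Hi] //; case: j => [[|[|[|j]]] Hj].
Qed.

Lemma add_mx3 (a11 a12 a13 a21 a22 a23 a31 a32 a33
               b11 b12 b13 b21 b22 b23 b31 b32 b33 : R) :
  mx3 a11 a12 a13 a21 a22 a23 a31 a32 a33 + mx3 b11 b12 b13 b21 b22 b23 b31 b32 b33 =
  mx3 (a11+b11) (a12+b12) (a13+b13) (a21+b21) (a22+b22) (a23+b23)
      (a31+b31) (a32+b32) (a33+b33).
Proof.
apply/matrixP => i j; rewrite !mxE.
by case: i => [[|[|[|i]]] Hi] //; case: j => [[|[|[|j]]] Hj].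
Qed.

Lemma scale_mx3 (k a11 a12 a13 a21 a22 a23 a31 a32 a33 : R) :
  k *: mx3 a11 a12 a13 a21 a22 a23 a31 a32 a33 =
  mx3 (k*a11) (k*a12) (k*a13) (k*a21) (k*a22) (k*a23) (k*a31) (k*a32) (k*a33).
Proof.
apply/matrixP => i j; rewrite !mxE.
by case: i => [[|[|[|i]]] Hi] //; case: j => [[|[|[|j]]] Hj].
Qed.

Lemma mx3_1 : (1 : 'M[R]_3) = mx3 1 0 0 0 1 0 0 0 1.
Proof.
apply/matrixP => i j; rewrite !mxE.
by case: i => [[|[|[|i]]] Hi] //; case: j => [[|[|[|j]]] Hj].
Qed.

Lemma mul_mx3_vec3 (a11 a12 a13 a21 a22 a23 a31 a32 a33 x y z : R) :
  mx3 a11 a12 a13 a21 a22 a23 a31 a32 a33 *m vec3 x y z =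
  vec3 (a11*x + a12*y + a13*z) (a21*x + a22*y + a23*z) (a31*x + a32*y + a33*z).
Proof.
apply/matrixP => i j; rewrite !mxE !big_ord_recr big_ord0 /= !mxE add0r.
by case: i => [[|[|[|i]]] Hi] //; case: j => [[|j] Hj].
Qed.

Definition crossmx (w1 w2 w3 : R) : 'M[R]_3 :=
  mx3 0 (- w3) w2  w3 0 (- w1)  (- w2) w1 0.

(* Rodrigues' matrix of the rotation about the unit axis w with sine s and cosine c. *)
Definition rotmx (w1 w2 w3 s c : R) : 'M[R]_3 :=
  mx3 (c + (1 - c) * w1 * w1) (- s * w3 + (1 - c) * w1 * w2) (s * w2 + (1 - c) * w1 * w3)
      (s * w3 + (1 - c) * w2 * w1) (c + (1 - c) * w2 * w2) (- s * w1 + (1 - c) * w2 * w3)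
      (- s * w2 + (1 - c) * w3 * w1) (s * w1 + (1 - c) * w3 * w2) (c + (1 - c) * w3 * w3).

Lemma crossmx_sqr (w1 w2 w3 : R) :
  let n := w1 ^+ 2 + w2 ^+ 2 + w3 ^+ 2 in
  crossmx w1 w2 w3 ^+ 2 =
  mx3 (w1 * w1 - n) (w1 * w2) (w1 * w3)
      (w2 * w1) (w2 * w2 - n) (w2 * w3)
      (w3 * w1) (w3 * w2) (w3 * w3 - n).
Proof.
move=> n; rewrite expr2 -mulmxE mul_mx3 /n.
congr (mx3 _ _ _ _ _ _ _ _ _); ring.
Qed.

Section UnitAxis.
Variables w1 w2 w3 : R.
Hypothesis w_unit : w1 ^+ 2 + w2 ^+ 2 + w3 ^+ 2 = 1.

Lemma crossmx_cube : crossmx w1 w2 w3 ^+ 3 = - crossmx w1 w2 w3.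
Proof.
rewrite -scaleN1r exprS crossmx_sqr w_unit -mulmxE /crossmx mul_mx3 scale_mx3.
congr (mx3 _ _ _ _ _ _ _ _ _); ring.
Qed.

Lemma rodrigues (s c : R) :
  1 + s *: crossmx w1 w2 w3 + (1 - c) *: crossmx w1 w2 w3 ^+ 2 = rotmx w1 w2 w3 s c.
Proof.
rewrite crossmx_sqr w_unit mx3_1 /crossmx !scale_mx3 !add_mx3.
congr (mx3 _ _ _ _ _ _ _ _ _); ring.
Qed.

End UnitAxis.

Section ExpmxCubeOpp.
Variable K : 'M[R]_3.
Hypothesis K3 : K ^+ 3 = - K.

Lemma exprK_odd j : K ^+ j.*2.+1 = (-1) ^+ j *: K.
Proof.
elim: j => [|j IH]; first by rewrite expr1 expr0 scale1r.
rewrite doubleS -[j.*2.+3]addn2 exprD IH -scalerAl -exprS K3.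
by rewrite scalerN exprS mulN1r scaleNr.
Qed.

Lemma exprK_even j : K ^+ j.*2.+2 = (-1) ^+ j *: K ^+ 2.
Proof. by rewrite exprS exprK_odd -scalerAr -expr2. Qed.

(* The constant term (k == 0) of the exponential series is [1 = (1 + K^2) - K^2]. *)
Lemma exp_series_termE (t : R) k :
  (k`!%:R)^-1 *: (t *: K) ^+ k =
  sin_coeff t k *: K - cos_coeff t k *: K ^+ 2 + (k == 0)%:R *: (1 + K ^+ 2).
Proof.
rewrite exprZn scalerA /sin_coeff /cos_coeff.
have [k_odd | k_even] := boolP (odd k).
- rewrite -[k]odd_double_half k_odd add1n exprK_odd /= odd_double /= doubleK.
  by rewrite !mul0r scale0r subr0 scale0r addr0 scalerA mul1r; congr (_ *: _); ring.
- rewrite -[k]odd_double_half (negbTE k_even) add0n.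
  case: (k./2) => [|j] /=.
    rewrite !expr0 expr0z fact0 invr1 !mul0r !mulr1 scale0r sub0r !scale1r.
    by rewrite addrCA addNr addr0.
  rewrite doubleS exprK_even /= odd_double /= doubleK.
  rewrite !mul0r scale0r sub0r scale0r addr0 scalerA -scaleNr; congr (_ *: _).
  by rewrite -exprnP (exprS (-1)); ring.
Qed.

Lemma exp_seriesE (t : R) n :
  series (fun k : nat => (k`!%:R)^-1 *: (t *: K) ^+ k) n =
  series (sin_coeff t) n *: K - series (cos_coeff t) n *: K ^+ 2 +
  (0 < n)%:R *: (1 + K ^+ 2).
Proof.
elim: n => [|n IH]; first by rewrite /series /= !big_geq // !scale0r subrr addr0.
rewrite !seriesSr IH exp_series_termE !scalerDl.
have -> : (0 < n.+1)%:R = (0 < n)%:R + (n == 0)%:R :> R.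
  by case: n {IH} => [|n] /=; rewrite ?add0r ?addr0.
by rewrite scalerDl addrACA [_ - _ + _]addrACA opprD.
Qed.

Lemma expmx_cube_opp (t : R) :
  expmx (t *: K) = 1 + sin t *: K + (1 - cos t) *: K ^+ 2.
Proof.
apply: (cvg_lim (@norm_hausdorff _ _)); rewrite -cvg_shiftS.
have -> : [sequence series (fun k : nat => (k`!%:R)^-1 *: (t *: K) ^+ k) n.+1]_n =
  (fun n => series (sin_coeff t) n.+1 *: K - series (cos_coeff t) n.+1 *: K ^+ 2
            + (1 + K ^+ 2)).
  by apply/funext => n /=; rewrite exp_seriesE scale1r.
have -> : 1 + sin t *: K + (1 - cos t) *: K ^+ 2 =
          sin t *: K - cos t *: K ^+ 2 + (1 + K ^+ 2).
  by rewrite scalerBl scale1r [RHS]addrC addrACA.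
apply: cvgD; last exact: cvg_cst.
apply: cvgB; apply: cvgZr_tmp; rewrite (cvg_shiftS (series _)) unlock.
  exact: is_cvg_series_sin_coeff.
exact: is_cvg_series_cos_coeff.
Qed.

End ExpmxCubeOpp.

Lemma expmx_crossmx (w1 w2 w3 t : R) : w1 ^+ 2 + w2 ^+ 2 + w3 ^+ 2 = 1 ->
  expmx (t *: crossmx w1 w2 w3) = rotmx w1 w2 w3 (sin t) (cos t).
Proof. by move=> w_unit; rewrite expmx_cube_opp ?crossmx_cube ?rodrigues. Qed.

Definition rotx_cs (c s : R) : 'M[R]_3 := mx3 1 0 0  0 c s  0 (- s) c.
Definition rotx (p : R) : 'M[R]_3 := rotx_cs (cos p) (sin p).

Lemma rotxD a b : rotx a * rotx b = rotx (a + b).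
Proof.
rewrite -mulmxE /rotx /rotx_cs mul_mx3 sinD cosD.
congr (mx3 _ _ _ _ _ _ _ _ _); ring.
Qed.

Lemma rotx0 : rotx 0 = 1.
Proof. by rewrite /rotx /rotx_cs sin0 cos0 oppr0 mx3_1. Qed.

Lemma rotxXn p k : rotx p ^+ k = rotx (k%:R * p).
Proof.
elim: k => [|k IH]; first by rewrite expr0 mul0r rotx0.
by rewrite exprS IH rotxD mulrS mulrDl mul1r.
Qed.

Lemma rotxV p : (rotx p)^-1 = rotx (- p).
Proof.
have rotx_unit : rotx p \is a GRing.unit.
  by apply/unitrP; exists (rotx (- p)); rewrite !rotxD addNr subrr rotx0.
by rewrite -[RHS](mulKr rotx_unit) rotxD subrr rotx0 mulr1.
Qed.

Lemma rotxXz p (n : int) : rotx p ^ n = rotx (n%:~R * p).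
Proof.
case: n => k; first by rewrite /exprz rotxXn.
by rewrite /exprz rotxXn rotxV NegzE mulrNz mulNr.
Qed.

Lemma rotx_Npole p : rotx p *m Npole R = vec3 0 (sin p) (cos p).
Proof. by rewrite /rotx /rotx_cs /Npole mul_mx3_vec3; congr (vec3 _ _ _); ring. Qed.

(* Stereographic parametrisation of the ellipse [c^2 + k y^2 = 1] from its point (-1, 0). *)
Lemma ellipse_rat_param (c y k : R) : c ^+ 2 + k * y ^+ 2 = 1 -> 1 + c != 0 ->
  exists m, c = (1 - k * m ^+ 2) / (1 + k * m ^+ 2) /\ y = 2 * m / (1 + k * m ^+ 2).
Proof.
move=> cy_ellipse c_neq; exists (y / (1 + c)).
have den_eq : 1 + k * (y / (1 + c)) ^+ 2 = 2 / (1 + c).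
  by rewrite expr_div_n mulrA (_ : k * y ^+ 2 = 1 - c ^+ 2); [field | lra].
have km_eq : k * (y / (1 + c)) ^+ 2 = (1 - c) / (1 + c).
  by apply: (addrI 1); rewrite den_eq; field.
by rewrite den_eq km_eq; split; field; rewrite ?c_neq.
Qed.

(* Once the axes are rational in m, [field] checks the identity entrywise. *)
Lemma rotmx_four_product (m c u s k : R) :
  c = (1 - 2 * m ^+ 2) / (1 + 2 * m ^+ 2) -> u = 2 * m / (1 + 2 * m ^+ 2) ->
  s = 2 * c / (1 + c ^+ 2) -> k = (c ^+ 2 - 1) / (1 + c ^+ 2) ->
  rotmx u (- u) c s k *m rotmx (- u) (- u) c s k *m
  rotmx (- u) u c s k *m rotmx u u c s k =
  rotx_cs ((3 * c ^+ 2 - 1) / (1 + c ^+ 2)) (- 4 * u * c / (1 + c ^+ 2)) ^+ 4.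
Proof.
move=> -> -> -> ->; have m_pos : 0 < 1 + 2 * m ^+ 2 by have := sqr_ge0 m; lra.
rewrite (exprS _ 3) (exprS _ 2) (expr2 (rotx_cs _ _)) -!mulmxE.
rewrite /rotmx /rotx_cs !mul_mx3.
congr (mx3 _ _ _ _ _ _ _ _ _); field.
all: rewrite (lt0r_neq0 m_pos) /=; apply: lt0r_neq0.
all: have := exprn_gt0 2 m_pos; have := sqr_ge0 (1 - 2 * m ^+ 2); lra.
Qed.

End Rotations.

Section Trig.
Variable R : realType.

Lemma one_add_sqr_gt0 (x : R) : 0 < 1 + x ^+ 2.
Proof. by have := sqr_ge0 x; lra. Qed.

Lemma sin_2x (x : R) : sin (2 * x) = 2 * sin x * cos x.
Proof. by rewrite (_ : 2 * x = x + x) ?sinD; ring. Qed.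

Lemma cos_2x (x : R) : cos (2 * x) = cos x ^+ 2 - sin x ^+ 2.
Proof. by rewrite (_ : 2 * x = x + x) ?cosD; ring. Qed.

Lemma cos_4x (x : R) : cos (4 * x) = (cos x ^+ 2 - sin x ^+ 2) ^+ 2 - (2 * sin x * cos x) ^+ 2.
Proof. by rewrite (_ : 4 * x = 2 * (2 * x)) ?cos_2x ?sin_2x //; ring. Qed.

Lemma cos_pi4 : cos (pi / 4 : R) = sin (pi / 4).
Proof.
by rewrite -cosBpihalf (_ : pi / 4 - pi / 2 = - (pi / 4)) ?cosN //; field.
Qed.

Lemma sin_pi4_sqr : sin (pi / 4 : R) ^+ 2 = 1 / 2.
Proof. by have := cos2Dsin2 (pi / 4 : R); rewrite cos_pi4; lra. Qed.

Lemma sin_pi4_gt0 : 0 < sin (pi / 4 : R).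
Proof. have pi_pos := pi_gt0 R; apply: sin_gt0_pihalf; apply/andP; split; lra. Qed.

Lemma sqrt2E : Num.sqrt 2 = 2 * sin (pi / 4 : R).
Proof.
rewrite -[2 * _]ger0_norm -?sqrtr_sqr; last by have := sin_pi4_gt0; lra.
by rewrite exprMn sin_pi4_sqr; congr Num.sqrt; field.
Qed.

End Trig.

Section Alpha.
Variable R : realType.
Variable al : R.
Hypotheses (al_gt0 : 0 < al) (al_lt_pi4 : al < pi / 4).

Local Notation u := (sin al * sin (pi / 4)).

Lemma al_lt_pi2 : al < pi / 2.
Proof. by move: al_lt_pi4 (pi_gt0 R); lra. Qed.

Lemma cos_al_gt0 : 0 < cos al.
Proof.
have al_gt_mpi2 : - (pi / 2) < al by move: al_gt0 (pi_gt0 R); lra.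
by apply: cos_gt0_pihalf; rewrite al_gt_mpi2 al_lt_pi2.
Qed.

Lemma cos_al_sqr_gt : 1 < 3 * cos al ^+ 2.
Proof.
have al2_gt : - (pi / 2) < 2 * al by move: al_gt0 (pi_gt0 R); lra.
have al2_lt : 2 * al < pi / 2 by move: al_lt_pi4; lra.
have : 0 < cos (2 * al) by apply: cos_gt0_pihalf; rewrite al2_gt al2_lt.
by rewrite cos_2x sin2cos2; lra.
Qed.

Lemma one_add_cos_al_neq0 : 1 + cos al != 0.
Proof. by apply: lt0r_neq0; move: cos_al_gt0; lra. Qed.

Lemma axis_unit : cos al ^+ 2 + 2 * u ^+ 2 = 1.
Proof. by rewrite exprMn sin_pi4_sqr sin2cos2; lra. Qed.

Lemma Xab_pi4 a b :
  Xab al (pi / 4) a b = crossmx (sgn R a * u) (- (sgn R b * u)) (cos al).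
Proof.
rewrite /Xab /Fm /G1 /G2 cos_pi4 !scale_mx3 !add_mx3 /crossmx.
congr (mx3 _ _ _ _ _ _ _ _ _); ring.
Qed.

Lemma expmx_Xab_pi4 (t : R) a b :
  expmx (t *: Xab al (pi / 4) a b) =
  rotmx (sgn R a * u) (- (sgn R b * u)) (cos al) (sin t) (cos t).
Proof.
rewrite Xab_pi4 expmx_crossmx // sqrrN !exprMn.
have sgn_sqr x : sgn R x ^+ 2 = 1 by case: x; rewrite /sgn ?sqrrN expr1n.
by rewrite !sgn_sqr -exprMn; have := axis_unit; lra.
Qed.

Lemma s_max_arg_range : -1 <= - (sin al ^+ 2) / (1 + cos al ^+ 2) <= 1.
Proof.
have c_pos := one_add_sqr_gt0 (cos al).
rewrite ler_pdivlMr // ler_pdivrMr // sin2cos2.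
by have := sqr_ge0 (cos al); lra.
Qed.

Lemma cos_s_max : cos (s_max al) = (cos al ^+ 2 - 1) / (1 + cos al ^+ 2).
Proof. by rewrite /s_max acosK ?in_itv /= ?s_max_arg_range // sin2cos2 opprB. Qed.

Lemma sin_s_max : sin (s_max al) = 2 * cos al / (1 + cos al ^+ 2).
Proof.
have c_pos := one_add_sqr_gt0 (cos al).
rewrite /s_max sin_acos ?s_max_arg_range // -[RHS]ger0_norm -?sqrtr_sqr.
  by congr Num.sqrt; rewrite sin2cos2; field; exact: lt0r_neq0.
by apply: divr_ge0; move: cos_al_gt0 (sqr_ge0 (cos al)); lra.
Qed.

Lemma cos_sin_al_rat : exists t,
  cos al = (1 - t ^+ 2) / (1 + t ^+ 2) /\ sin al = 2 * t / (1 + t ^+ 2).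
Proof.
have unit_circle : cos al ^+ 2 + 1 * sin al ^+ 2 = 1 by rewrite mul1r cos2Dsin2.
by have [t] := ellipse_rat_param unit_circle one_add_cos_al_neq0; rewrite !mul1r; exists t.
Qed.

Lemma v_eq_s_max s :
  let den := ecoef al - Acoef al s + Bcoef al s in
  dcoef al - Acoef al s - Bcoef al s - Ccoef al s =
    (cos al ^+ 2 - 1) / (1 + cos al ^+ 2) * den ->
  den != 0 -> v al s = s_max al.
Proof.
move=> den num_eq den_neq.
by rewrite /v num_eq mulfK // /s_max sin2cos2 opprB.
Qed.

Lemma v_0 : v al 0 = s_max al.
Proof.
have [t [cos_t sin_t]] := cos_sin_al_rat.
have t_pos := one_add_sqr_gt0 t.
have t_neq : (1 + t ^+ 2) ^+ 2 + (1 - t ^+ 2) ^+ 2 != 0.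
  by apply: lt0r_neq0; have := exprn_gt0 2 t_pos; have := sqr_ge0 (1 - t ^+ 2); lra.
have den_eq : ecoef al - Acoef al 0 + Bcoef al 0 = 4 * (1 + cos al ^+ 2).
  rewrite /ecoef /Acoef /Bcoef sin0 cos0 sin_2x cos_2x cos_4x cos_t sin_t.
  by field; rewrite (lt0r_neq0 t_pos).
apply: v_eq_s_max; last by rewrite den_eq mulf_neq0 // lt0r_neq0 ?one_add_sqr_gt0.
rewrite den_eq /dcoef /Acoef /Bcoef /Ccoef sin0 !mulr0 !cos0 sin_2x cos_t sin_t.
by field; rewrite (lt0r_neq0 t_pos) t_neq.
Qed.

Lemma v_s_max : v al (s_max al) = s_max al.
Proof.
have [t [cos_t sin_t]] := cos_sin_al_rat.
have t_pos := one_add_sqr_gt0 t.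
have t_neq : (1 + t ^+ 2) ^+ 2 + (1 - t ^+ 2) ^+ 2 != 0.
  by apply: lt0r_neq0; have := exprn_gt0 2 t_pos; have := sqr_ge0 (1 - t ^+ 2); lra.
have den_eq : ecoef al - Acoef al (s_max al) + Bcoef al (s_max al) =
              4 * (3 * cos al ^+ 2 - 1) ^+ 2 / (1 + cos al ^+ 2).
  rewrite /ecoef /Acoef /Bcoef sin_s_max cos_s_max sin_2x cos_2x cos_4x cos_t sin_t.
  by field; rewrite (lt0r_neq0 t_pos) t_neq.
apply: v_eq_s_max.
  rewrite den_eq /dcoef /Acoef /Bcoef /Ccoef cos_2x sin_s_max cos_s_max sin_2x cos_t sin_t.
  by field; rewrite (lt0r_neq0 t_pos) t_neq.
rewrite den_eq; apply: lt0r_neq0; apply: divr_gt0.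
  by rewrite mulr_gt0 // exprn_gt0 //; move: cos_al_sqr_gt; lra.
exact: one_add_sqr_gt0.
Qed.

Lemma theta_sin_cos_sqr :
  1 - (- 4 * u * cos al / (1 + cos al ^+ 2)) ^+ 2 =
  ((3 * cos al ^+ 2 - 1) / (1 + cos al ^+ 2)) ^+ 2.
Proof.
have c_pos := one_add_sqr_gt0 (cos al).
rewrite !expr_div_n !exprMn sin_pi4_sqr sin2cos2.
by field; exact: lt0r_neq0.
Qed.

Lemma theta_arg_range : -1 <= - 4 * u * cos al / (1 + cos al ^+ 2) <= 1.
Proof.
have := sqr_ge0 ((3 * cos al ^+ 2 - 1) / (1 + cos al ^+ 2)).
by rewrite -theta_sin_cos_sqr => ?; apply/andP; split; nra.
Qed.

Lemma thetaE : theta al = asin (- 4 * u * cos al / (1 + cos al ^+ 2)).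
Proof. by rewrite /theta sqrt2E; congr (asin (_ / _)); ring. Qed.

Lemma sin_theta : sin (theta al) = - 4 * u * cos al / (1 + cos al ^+ 2).
Proof. by rewrite thetaE asinK // in_itv /= theta_arg_range. Qed.

Lemma cos_theta : cos (theta al) = (3 * cos al ^+ 2 - 1) / (1 + cos al ^+ 2).
Proof.
rewrite thetaE cos_asin ?theta_arg_range // theta_sin_cos_sqr sqrtr_sqr ger0_norm //.
by apply: divr_ge0; move: cos_al_sqr_gt (one_add_sqr_gt0 (cos al)); lra.
Qed.

Lemma Mbar_rotx s : v al s = s_max al -> Mbar (pi / 4) s al = rotx (4 * theta al).
Proof.
move=> v_s; have [m [cos_m u_m]] := ellipse_rat_param axis_unit one_add_cos_al_neq0.
rewrite /Mbar v_s !expmx_Xab_pi4 /sgn /= !mul1r !mulN1r opprK.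
rewrite (rotmx_four_product cos_m u_m sin_s_max cos_s_max).
by rewrite -cos_theta -sin_theta rotxXn.
Qed.

Lemma expmx_s_max_Npole :
  expmx (s_max al *: Xab al (pi / 4) true true) *m Npole R = rotx (theta al) *m Npole R.
Proof.
have c_pos := one_add_sqr_gt0 (cos al).
rewrite expmx_Xab_pi4 rotx_Npole /sgn /= mul1r /rotmx /Npole mul_mx3_vec3.
rewrite sin_s_max cos_s_max sin_theta cos_theta.
by congr (vec3 _ _ _); field; exact: lt0r_neq0.
Qed.

End Alpha.

Theorem proposition6 (R : realType) (n : int) (al : R) :
  0 < al < pi / 4 ->
  (Mbar (pi / 4) 0 al ^ n) *m Npole R =
    vec3 0 (sin (4 * n%:~R * theta al)) (cos (4 * n%:~R * theta al)) /\
  (Mbar (pi / 4) (s_max al) al ^ n) *m expmx (s_max al *: Xab al (pi / 4) true true) *m Npole R =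
    vec3 0 (sin ((4 * n%:~R + 1) * theta al)) (cos ((4 * n%:~R + 1) * theta al)).
Proof.
case/andP=> al_gt0 al_lt_pi4.
rewrite !Mbar_rotx ?v_0 ?v_s_max // rotxXz -mulmxA expmx_s_max_Npole //.
rewrite mulmxA mulmxE rotxD !rotx_Npole.
by split; congr (vec3 _ (sin _) (cos _)); ring.
Qed.
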